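(* Let $\mathbf k$ be an algebraically closed field of characteristic zero, $n\geq 1$, $\zeta\in\mathbf k$ an $n$-th root of unity, and let $F:\mathcal D_{\zeta,n}\to\langle\delta_1\rangle$ be the functor defined below. Then for every $k\in\mathbb N$ the induced map $\mathrm{Hom}_{\mathcal D_{\zeta,n}}(k,0)\to\mathrm{Hom}_{\mathrm{Vec}_{\mathbb Z_n}^{\zeta}}(\delta_1^{\otimes k},\mathbf 1)$ is surjective.
   Context: $\mathrm{Vec}_{\mathbb Z_n}^{\zeta}$ is the fusion category of finite-dimensional $\mathbb Z_n$-graded $\mathbf k$-vector spaces with graded tensor product, unit $\mathbf 1=\delta_0$, unit isomorphisms identities, and associativity on $(\delta_a\otimes\delta_b)\otimes\delta_c$ given by multiplication by $\zeta^{\,a(b+c-\overline{b+c})/n}$ ($a,b,c\in\{0,\dots,n-1\}$, $\overline{m}$ the remainder of $m$ mod $n$); $\delta_a$ is the simple object concentrated in degree $a$. $\langle\delta_1\rangle$ is the monoidal subcategory (full) of $\mathrm{Vec}_{\mathbb Z_n}^{\zeta}$ with objects $\delta_1^{\otimes k}$, $k\in\mathbb N$. $\mathcal D_{\zeta,n}$ is the strict $\mathbf k$-linear monoidal category with objects $k\in\mathbb N$, $k\otimes l=k+l$, unit $0$, whose morphisms are generated under composition, tensor product and linear combinations by $\mathrm{id}_1$, $f_n:n\to 0$ and $g_n:0\to n$, subject to $f_n\circ g_n=\mathrm{id}_0$, $g_n\circ f_n=\mathrm{id}_n$, and $\mathrm{id}_1\otimes f_n=\zeta\,(f_n\otimes\mathrm{id}_1)$.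 The $\mathbf k$-linear monoidal functor $F$ is defined by $F(1)=\delta_1$, $F(f_n)=\lambda$ the canonical isomorphism $\delta_1^{\otimes n}\xrightarrow{\sim}\mathbf 1$, and $F(g_n)=\lambda^{-1}$. *)

From mathcomp Require Import all_boot all_order all_algebra.
Set Implicit Arguments. Unset Strict Implicit. Unset Printing Implicit Defensive.
Import GRing.Theory.
Local Open Scope ring_scope.

(* Vec_{Z_n}^zeta, skeletal description on simple objects.                *)
(* The simple object delta_x (x in {0,..,n-1}) is the graded line k in     *)
(* degree x; delta_x (x) delta_y = delta_{(x+y) mod n}.  A morphism        *)
(* delta_x -> delta_y is a graded linear map, i.e. a scalar c : K, which   *)
(* must be 0 when x <> y.  Hence delta_1^{(x) a} = delta_{a mod n} and     *)
(*   Hom(delta_1^{(x) a}, delta_1^{(x) b})                                 *)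
(* is the subspace VecHom n a b of K below.                                *)

Definition VecHom (K : fieldType) (n a b : nat) : pred K :=
  [pred c : K | ((a %% n)%N != (b %% n)%N) ==> (c == 0)].

(* associator on (delta_x (x) delta_y) (x) delta_z, x y z in {0..n-1}:
   multiplication by zeta^( x (y + z - (y+z mod n)) / n ). *)
Definition assoc_sc (K : fieldType) (n : nat) (zeta : K) (x y z : nat) : K :=
  zeta ^+ (x * ((y + z - (y + z) %% n) %/ n))%N.

(* F(a) = delta_1^{(x) a} with left bracketing: L_0 = 1, L_{a+1} = L_a (x) delta_1.
   The monoidal structure J_{a,c} : F a (x) F c -> F (a + c) is the canonical
   composite of associators:  J_{a,0} = id (unitors are identities),
   J_{a,c+1} = (J_{a,c} (x) id) o alpha^{-1}_{L_a, L_c, delta_1}. *)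
Fixpoint Jsc (K : fieldType) (n : nat) (zeta : K) (a c : nat) : K :=
  match c with
  | 0 => 1
  | c'.+1 => Jsc n zeta a c' * (assoc_sc n zeta (a %% n)%N (c' %% n)%N 1)^-1
  end.

(* D_{zeta,n}: morphisms are generated under composition, tensor product   *)
(* and linear combinations by id_1, f_n : n -> 0, g_n : 0 -> n.            *)
(* Dterm K n a b = syntactic expressions for morphisms a -> b (every        *)
(* morphism of D_{zeta,n} is the class of such an expression modulo the     *)
(* relations; the relations are irrelevant for the image of F).            *)
Inductive Dterm (K : Type) (n : nat) : nat -> nat -> Type :=
| Did1 : Dterm K n 1 1
| Dfn : Dterm K n n 0
| Dgn : Dterm K n 0 n
| Dcomp : forall a b c, Dterm K n b c -> Dterm K n a b -> Dterm K n a c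
| Dtens : forall a b c d, Dterm K n a b -> Dterm K n c d ->
          Dterm K n (a + c) (b + d)
| Dzero : forall a b, Dterm K n a b
| Dscale : forall a b, K -> Dterm K n a b -> Dterm K n a b
| Dadd : forall a b, Dterm K n a b -> Dterm K n a b -> Dterm K n a b.

(* The monoidal functor F on morphisms: F(id_1) = id, F(f_n) = lambda,
   F(g_n) = lambda^{-1} (lambda = canonical iso delta_1^{(x) n} = delta_0 = 1,
   i.e. the scalar 1), F(t o u) = F t o F u,
   F(t (x) u) = J_{b,d} o (F t (x) F u) o J_{a,c}^{-1}, F linear. *)
Fixpoint FD (K : fieldType) (n : nat) (zeta : K) (a b : nat)
  (t : Dterm K n a b) {struct t} : K :=
  match t with
  | Did1 => 1
  | Dfn => 1
  | Dgn => 1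
  | Dcomp _ _ _ t1 t2 => FD zeta t1 * FD zeta t2
  | Dtens a b c d t1 t2 =>
      Jsc n zeta b d * (FD zeta t1 * FD zeta t2) * (Jsc n zeta a c)^-1
  | Dzero _ _ => 0
  | Dscale _ _ s t1 => s * FD zeta t1
  | Dadd _ _ t1 t2 => FD zeta t1 + FD zeta t2
  end.

(* Hom(δ_1^{⊗k}, 1) vanishes unless n divides k, and is then a line.  For
   k = m n the morphism f_n ⊗ ... ⊗ f_n (m factors) is sent by F to a composite
   of the isomorphisms λ and of associators, hence to a nonzero scalar; its
   multiples exhaust the line. *)
From mathcomp Require Import all_boot all_order all_algebra.
Set Implicit Arguments. Unset Strict Implicit. Unset Printing Implicit Defensive.
Import GRing.Theory.
Local Open Scope ring_scope.

Section NonzeroImage.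

Variables (K : fieldType) (n : nat) (zeta : K).
Hypothesis zeta_neq0 : zeta != 0.

Lemma Jsc_neq0 a c : Jsc n zeta a c != 0.
Proof.
elim: c => [|c IHc] /=; first exact: oner_neq0.
by rewrite mulf_neq0 // invr_eq0 expf_neq0.
Qed.

Lemma exists_FD_neq0 m : exists t : Dterm K n (m * n) 0, FD zeta t != 0.
Proof.
elim: m => [|m [t FDt_neq0]].
  by exists (Dcomp (Dfn K n) (Dgn K n)); rewrite /= mulr1 oner_neq0.
rewrite mulSn; exists (Dtens (Dfn K n) t) => /=.
by rewrite !mul1r mulf_neq0 // invr_eq0 Jsc_neq0.
Qed.

End NonzeroImage.

Lemma FD_scale_onto (K : fieldType) (n : nat) (zeta : K) a b
    (t : Dterm K n a b) : FD zeta t != 0 ->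
  forall phi : K, exists u : Dterm K n a b, FD zeta u = phi.
Proof.
by move=> FDt_neq0 phi; exists (Dscale (phi / FD zeta t) t); rewrite /= divfK.
Qed.

Lemma unity_root_neq0 (R : idomainType) (n : nat) (z : R) :
  (0 < n)%N -> z ^+ n = 1 -> z != 0.
Proof.
move=> n_gt0 zn1; apply: contra_eq_neq zn1 => ->.
by rewrite expr0n gtn_eqF // eq_sym oner_eq0.
Qed.

Theorem mainTheorem12 (K : closedFieldType) (hK : [pchar K] =i pred0)
  (n : nat) (hn : (0 < n)%N) (zeta : K) (hz : zeta ^+ n = 1) (k : nat) :
  forall phi : K, phi \in VecHom n k 0 ->
  exists t : Dterm K n k 0, FD zeta t = phi.
Proof.
move=> phi; rewrite inE mod0n /=.
have [k_mod0 _ | _ /eqP ->] := eqVneq (k %% n)%N 0%N; last first.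
  by exists (Dzero K n k 0).
have /dvdnP[m ->] : (n %| k)%N by rewrite /dvdn k_mod0.
have [t FDt_neq0] := exists_FD_neq0 n (unity_root_neq0 hn hz) m.
exact: FD_scale_onto FDt_neq0 phi.
Qed.
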